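(* Let $\vec G=(V,\vec E)$ be a totally cyclic directed graph without loops and without parallel or antiparallel edges, whose underlying simple graph is three-edge-connected. Then there is a total order $<$ of $\vec E$ such that there is a strong map $\mathcal M^*(\vec G)\longrightarrow\mathcal M(<)$.
   Context: $\mathcal M(\vec G)$ is the oriented matroid of the directed graph on its edge set (signed circuits: cycles of the underlying graph, with edges signed $+$ or $-$ according to whether they are traversed forwards or backwards); $\mathcal M^*(\vec G)$ is its dual, whose signed circuits are the signed minimal cuts $\big(\{(u,w)\in\vec E:u\in S,w\notin S\},\{(u,w)\in\vec E:w\in S,u\notin S\}\big)$ for $S\subset V$ with $S$ and $V\setminus S$ both inducing connected subgraphs. $\vec G$ is totally cyclic if every edge lies in a directed cycle. For a finite set $E$ totally ordered by $<$, $\mathcal M(<)$ is the uniform rank 2 oriented matroid on $E$ whose signed circuits are $(\{e_1,e_3\},\{e_2\})$ and $(\{e_2\},\{e_1,e_3\})$ for $e_1<e_2<e_3$, and whose signed cocircuits are $(\{e':e'<e\},\{e'':e''>e\})$ and its opposite. A strong map $\mathcal M_1\longrightarrow\mathcal M_2$ (same ground set) exists if every cocircuit of $\mathcal M_2$ is a covector of $\mathcal M_1$, equivalently every circuit of $\mathcal M_1$ is a vector of $\mathcal M_2$. *)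

From mathcomp Require Import all_boot.
Set Implicit Arguments. Unset Strict Implicit. Unset Printing Implicit Defensive.

(* A directed graph: finite vertex set V, finite edge set E, each edge e
   going from [tl e] to [hd e]. *)

(* A signed subset of E: (positive part, negative part). *)
Definition signed_set (E : finType) := ({set E} * {set E})%type.

Definition scompose (E : finType) (X Y : signed_set E) : signed_set E :=
  (X.1 :|: (Y.1 :\: X.2), X.2 :|: (Y.2 :\: X.1)).

Inductive covector_of (E : finType) (cocirc : signed_set E -> Prop)
  : signed_set E -> Prop :=
| cov_zero : covector_of cocirc (set0, set0)
| cov_comp X Y : cocirc X -> covector_of cocirc Y ->
                 covector_of cocirc (scompose X Y).

(* Signed circuits of M(G): cycles of the underlying graph, traversed
   v_0, e_0, v_1, e_1, ..., v_k, e_k, v_0 (k+1 distinct vertices and edges);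
   an edge is signed + if traversed forwards, - if backwards. *)
Definition signed_cycle (V E : finType) (tl hd : E -> V) (X : signed_set E) : Prop :=
  exists k (vs : 'I_k.+1 -> V) (es : 'I_k.+1 -> E),
    injective vs /\ injective es /\
    (forall i : 'I_k.+1,
        (tl (es i) = vs i /\ hd (es i) = vs (ordS i) /\ es i \in X.1 /\ es i \notin X.2)
     \/ (hd (es i) = vs i /\ tl (es i) = vs (ordS i) /\ es i \in X.2 /\ es i \notin X.1)) /\
    (forall e, e \in X.1 :|: X.2 -> exists i, e = es i).

(* Cocircuits of the dual M^*(G) are the circuits of M(G). *)
Definition dual_cocircuit (V E : finType) (tl hd : E -> V) := signed_cycle tl hd.

Definition dual_covector (V E : finType) (tl hd : E -> V) :=
  covector_of (dual_cocircuit tl hd).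

Definition totally_cyclic (V E : finType) (tl hd : E -> V) : Prop :=
  forall e : E, exists X : signed_set E,
    signed_cycle tl hd X /\ X.2 = set0 /\ e \in X.1.

Definition no_loops (V E : finType) (tl hd : E -> V) : Prop :=
  forall e : E, tl e != hd e.

Definition no_parallel_antiparallel (V E : finType) (tl hd : E -> V) : Prop :=
  forall e f : E, e != f ->
    ~ ((tl e = tl f /\ hd e = hd f) \/ (tl e = hd f /\ hd e = tl f)).

Definition uadj (V E : finType) (tl hd : E -> V) (A : {set E}) : rel V :=
  fun u v => [exists e in A, ((tl e == u) && (hd e == v)) || ((tl e == v) && (hd e == u))].

Definition three_edge_connected (V E : finType) (tl hd : E -> V) : Prop :=
  forall F : {set E}, #|F| <= 2 -> forall u v : V, connect (uadj tl hd (~: F)) u v.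

(* A total order < on E, given by an injective ranking r : E -> nat
   (e < f iff r e < r f).  Signed cocircuits of M(<). *)
Definition order_cocircuit (E : finType) (r : E -> nat) (X : signed_set E) : Prop :=
  exists e : E,
    X = ([set f | r f < r e], [set f | r e < r f]) \/
    X = ([set f | r e < r f], [set f | r f < r e]).

(* A strong map M1 --> M2 exists iff every cocircuit of M2 is a covector of M1.
   Here M1 = M^*(G), M2 = M(<). *)
Definition strong_map_dual_to_order (V E : finType) (tl hd : E -> V) (r : E -> nat) : Prop :=
  forall X, order_cocircuit r X -> dual_covector tl hd X.

From mathcomp Require Import all_boot zify.
Set Implicit Arguments. Unset Strict Implicit. Unset Printing Implicit Defensive.

(* For two nonnegative integer circulations p and q, the sign vector of p - q
   is a conformal union of signed cycles, hence a covector of M^*(G).  In a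
   totally cyclic 3-edge-connected graph, of any two edges one lies on a
   directed cycle avoiding the other, so some circulations phi_i separate
   every pair of edges.  For N large, phi1 = sum N^i phi_i and
   phi2 = sum phi_i have pairwise distinct ratios phi1/phi2 on the edges.
   Order the edges by this ratio: the cocircuit of M(<) at e is the sign
   vector of phi2(e) phi1 - phi1(e) phi2, a difference of circulations. *)

Lemma connect_exit (T : finType) (r : rel T) (A : {set T}) a b :
  connect r a b -> a \in A -> b \notin A ->
  exists u v, [/\ r u v, u \in A & v \notin A].
Proof.
case/connectP => p + ->; elim: p a => [|c p IH] a /=; first by move=> _ ->.
case/andP => rac pth aA lb; case cA: (c \in A); first exact: IH pth cA lb.
by exists a, c; rewrite cA.
Qed.

Lemma ordS_val k (i : 'I_k.+1) : val (ordS i) = if i < k then i.+1 else 0.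
Proof.
rewrite /=; case: ifP => ik; first by rewrite modn_small.
suff -> : (i : nat) = k by rewrite modnn.
by move/negbT: ik; rewrite -leqNgt; have := ltn_ord i; lia.
Qed.

Lemma iter_ordS_val k (i : 'I_k.+1) n : val (iter n (@ordS k.+1) i) = (i + n) %% k.+1.
Proof.
elim: n => [|n IH] /=; first by rewrite addn0 modn_small.
by rewrite IH -addn1 modnDml addn1 addnS.
Qed.

Definition lincomb (E I : finType) (c : I -> nat) (ph : I -> E -> nat) (f : E) :=
  \sum_i c i * ph i f.

Section Circulations.

Variables (V E : finType) (s t : E -> V).

Definition arcs (ok : pred E) : rel V :=
  fun u w => [exists f, [&& ok f, s f == u & t f == w]].

Lemma arcsP (ok : pred E) f : ok f -> arcs ok (s f) (t f).
Proof. by move=> okf; apply/existsP; exists f; rewrite okf !eqxx. Qed.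

Lemma connect_arcsS (ok : pred E) x f :
  ok f -> connect (arcs ok) x (s f) -> connect (arcs ok) x (t f).
Proof. by move=> okf /connect_trans; apply; apply/connect1/arcsP. Qed.

Definition dcycle (ok : pred E) k (vs : 'I_k.+1 -> V) (es : 'I_k.+1 -> E) :=
  injective vs /\ forall i, [/\ ok (es i), s (es i) = vs i & t (es i) = vs (ordS i)].

Lemma dcycle_edges_inj ok k (vs : 'I_k.+1 -> V) es : dcycle ok vs es -> injective es.
Proof.
case=> vs_inj es_arc i j eij; apply: vs_inj.
by have [_ <- _] := es_arc i; have [_ <- _] := es_arc j; rewrite eij.
Qed.

Lemma dcycle_connect ok k (vs : 'I_k.+1 -> V) es :
  dcycle ok vs es -> forall i j, connect (arcs ok) (vs i) (vs j).
Proof.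
case=> _ es_arc i j.
have walk n : connect (arcs ok) (vs i) (vs (iter n (@ordS k.+1) i)).
  elim: n => [|n IH] //=; apply: connect_trans IH (connect1 _).
  by have [okn <- <-] := es_arc (iter n (@ordS k.+1) i); apply: arcsP.
have /val_inj <- : val (iter (j + (k.+1 - i)) (@ordS k.+1) i) = j.
  by rewrite iter_ordS_val addnCA subnKC 1?ltnW // modnDr modn_small.
exact: walk.
Qed.

Lemma connect_dcycle (ok : pred E) g :
  ok g -> s g != t g -> connect (arcs ok) (t g) (s g) ->
  exists k (vs : 'I_k.+1 -> V) es, dcycle ok vs es /\ g \in codom es.
Proof.
move=> okg sgt /connectP [p0 pth0 elast].
case: (shortenP pth0) elast => p pth uq _ elast.
set x := t g in pth uq elast *.
pose k := size p.
pose vs (i : 'I_k.+1) := nth x (x :: p) i.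
pose pick_arc u w := odflt g [pick f | [&& ok f, s f == u & t f == w]].
pose es (i : 'I_k.+1) := if i < k then pick_arc (vs i) (nth x (x :: p) i.+1) else g.
have vs_last : vs ord_max = s g by rewrite /vs /= -last_nth -elast.
exists k, vs, es; split; last by apply/codomP; exists ord_max; rewrite /es ltnn.
split=> [i j /eqP|i]; first by rewrite /vs nth_uniq // => /eqP/val_inj.
rewrite /es; case: ifP => ik.
  have : arcs ok (nth x (x :: p) i) (nth x p i) by apply/(pathP x pth).
  rewrite /pick_arc; case: pickP => [f /and3P [okf /eqP sf /eqP tf] _ | none].
    by rewrite /= sf tf /vs ordS_val ik.
  by case/existsP => f; rewrite none.
have -> : i = ord_max.
  by apply: val_inj; move/negbT: ik; rewrite -leqNgt; have := ltn_ord i; rewrite /=; lia.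
split=> //.
by rewrite (_ : ordS ord_max = ord0) //; apply: val_inj; rewrite ordS_val /= ltnn.
Qed.

Definition circulation (phi : E -> nat) :=
  forall v, \sum_(f | s f == v) phi f = \sum_(f | t f == v) phi f.

Lemma circulation_lincomb (I : finType) (c : I -> nat) (ph : I -> E -> nat) :
  (forall i, circulation (ph i)) -> circulation (lincomb c ph).
Proof.
move=> ph_circ v; rewrite exchange_big [RHS]exchange_big /=.
by apply: eq_bigr => i _; rewrite -!big_distrr ph_circ.
Qed.

Lemma circulationZ c phi : circulation phi -> circulation (fun f => c * phi f).
Proof. by move=> phi_circ v; rewrite -!big_distrr phi_circ. Qed.

Lemma sum_card_preim (I : finType) (es : I -> E) (P : pred E) :
  \sum_(f | P f) #|[set i | es i == f]| = #|[set i | P (es i)]|.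
Proof.
rewrite -[RHS]sum1_card (eq_bigl (fun i => P (es i))) => [|i]; last by rewrite inE.
rewrite (partition_big es P) //; apply: eq_bigr => f Pf.
rewrite -sum1_card; apply: eq_bigl => i; rewrite inE.
by case: eqVneq => [->|]; rewrite ?Pf ?andbF.
Qed.

Lemma circulation_dcycle ok k (vs : 'I_k.+1 -> V) es :
  dcycle ok vs es -> circulation (fun f => #|[set i | es i == f]|).
Proof.
case=> _ es_arc v; rewrite !sum_card_preim -(card_preimset _ (@ordS_inj k.+1)).
apply: eq_card => i; rewrite !inE.
by have [_ _ ->] := es_arc i; have [_ -> _] := es_arc (ordS i).
Qed.

Lemma circulation_connect phi g :
  circulation phi -> 0 < phi g -> connect (arcs (fun f => 0 < phi f)) (t g) (s g).
Proof.
move=> phi_circ phi_g; apply/negPn/negP => not_back.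
pose R := [set w | connect (arcs (fun f => 0 < phi f)) (t g) w].
have sum_into (u : E -> V) :
    \sum_(f | u f \in R) phi f = \sum_(v in R) \sum_(f | u f == v) phi f.
  rewrite (partition_big u (mem R)) //; apply: eq_bigr => v vR; apply: eq_bigl => f.
  by case: eqVneq => [->|]; rewrite ?andbT ?andbF.
have out_in : \sum_(f | s f \in R) phi f = \sum_(f | t f \in R) phi f.
  by rewrite !sum_into; apply: eq_bigr => v _; apply: phi_circ.
(* Positive arcs never leave R, while g enters it: more flow enters R than leaves. *)
have R_closed f : s f \in R -> phi f <= (if t f \in R then phi f else 0).
  case phi_f: (0 < phi f); last by move: phi_f; rewrite lt0n => /negbFE/eqP ->.
  by rewrite !inE => sR; rewrite (connect_trans sR (connect1 (arcsP phi_f))).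
have : \sum_(f | s f \in R) phi f < \sum_(f | t f \in R) phi f.
  rewrite !(big_mkcond (fun f => _ \in R)) /= (bigD1 g) //= [X in _ < X](bigD1 g) //=.
  rewrite [s g \in R]inE (negbTE not_back) inE connect0 add0n -addn1 addnC.
  apply: leq_add => //; apply: leq_sum => f _.
  by case: ifP => // /R_closed.
by rewrite out_in ltnn.
Qed.

Lemma circulation_through (ok : pred E) g :
  ok g -> s g != t g -> connect (arcs ok) (t g) (s g) ->
  exists phi, [/\ circulation phi, 0 < phi g & forall f, ~~ ok f -> phi f = 0].
Proof.
move=> okg st_g back_g.
have [k [vs [es [cyc /codomP [i0 g_es]]]]] := connect_dcycle okg st_g back_g.
exists (fun f => #|[set i | es i == f]|); split.
- exact: circulation_dcycle cyc.
- by apply/card_gt0P; exists i0; rewrite inE g_es.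
move=> f not_ok; apply/eqP; rewrite cards_eq0; apply/eqP/setP => i; rewrite !inE.
by apply: contraNF not_ok => /eqP <-; have [] := cyc.2 i.
Qed.

End Circulations.

Section Conformal.

Variables (V E : finType) (tl hd : E -> V).

Definition reorient (p q : E -> nat) (u w : E -> V) (f : E) :=
  if q f < p f then u f else w f.

(* [(p f - q f) + (q f - p f)] is [|p f - q f|] in truncated subtraction. *)
Lemma circulation_reorient p q :
  circulation tl hd p -> circulation tl hd q ->
  circulation (reorient p q tl hd) (reorient p q hd tl)
              (fun f => (p f - q f) + (q f - p f)).
Proof.
move=> p_circ q_circ v.
have edgewise :
  \sum_f ((if tl f == v then p f else 0) + (if hd f == v then q f else 0)
          + (if reorient p q hd tl f == v then p f - q f + (q f - p f) else 0)) =
  \sum_f ((if hd f == v then p f else 0) + (if tl f == v then q f else 0)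
          + (if reorient p q tl hd f == v then p f - q f + (q f - p f) else 0)).
  apply: eq_bigr => f _; rewrite /reorient.
  by case: ltngtP; case: (tl f == v); case: (hd f == v) => /=; lia.
by rewrite !big_split -!big_mkcond /= p_circ q_circ in edgewise; lia.
Qed.

Lemma conformal_cycle p q g :
  circulation tl hd p -> circulation tl hd q -> tl g != hd g -> p g != q g ->
  exists2 X : signed_set E, signed_cycle tl hd X &
    [/\ X.1 \subset [set f | q f < p f], X.2 \subset [set f | p f < q f]
      & g \in X.1 :|: X.2].
Proof.
move=> p_circ q_circ g_nl pq_g.
have k_circ := circulation_reorient p_circ q_circ.
set k := fun f => _ in k_circ.
have k_g : 0 < k g by move: pq_g; rewrite /k; lia.
have st_g : reorient p q tl hd g != reorient p q hd tl g.
  by rewrite /reorient; case: ifP; rewrite // eq_sym.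
have [n [vs [es [cyc /codomP [i0 g_es]]]]] :=
  connect_dcycle k_g st_g (circulation_connect k_circ k_g).
pose X : signed_set E := ([set f | (f \in codom es) && (q f < p f)],
                          [set f | (f \in codom es) && (p f < q f)]).
have X_supp f : (f \in X.1 :|: X.2) = (f \in codom es) && (p f != q f).
  by rewrite !inE -andb_orr; case: ltngtP.
exists X; last split.
- have [vs_inj es_arc] := cyc.
  exists n, vs, es; split=> //; split; first exact: dcycle_edges_inj cyc.
  split=> [i|f]; last by rewrite X_supp => /andP [/codomP [i ->] _]; exists i.
  case: (es_arc i); rewrite /X /k /reorient !inE codom_f /= -!leqNgt.
  by case: (ltngtP (q (es i)) (p (es i))) => [||->]; [left | right | rewrite subnn].
- by apply/subsetP => f; rewrite !inE => /andP [].
- by apply/subsetP => f; rewrite !inE => /andP [].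
- by rewrite X_supp {1}g_es codom_f pq_g.
Qed.

End Conformal.

Lemma covector_of_conformal (E : finType) (cocirc : signed_set E -> Prop)
    (Z : signed_set E) :
  [disjoint Z.1 & Z.2] ->
  (forall g, g \in Z.1 :|: Z.2 -> exists2 X, cocirc X &
     [/\ X.1 \subset Z.1, X.2 \subset Z.2 & g \in X.1 :|: X.2]) ->
  covector_of cocirc Z.
Proof.
case: Z => Z1 Z2 /= Z_disj Z_conf.
have cover (r : seq E) : exists2 Y, covector_of cocirc Y &
    [/\ Y.1 \subset Z1, Y.2 \subset Z2 &
        {in r, forall g, g \in Z1 :|: Z2 -> g \in Y.1 :|: Y.2}].
  elim: r => [|g r [Y Y_cov [Y1 Y2 Y_supp]]].
    by exists (set0, set0); [exact: cov_zero | rewrite !sub0set].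
  have [gZ|gZ] := boolP (g \in Z1 :|: Z2); last first.
    by exists Y => //; split=> // h /predU1P [->|/Y_supp //]; rewrite (negbTE gZ).
  have [X X_cir [X1 X2 gX]] := Z_conf g gZ.
  exists (scompose X Y); first exact: cov_comp.
  have XY_supp h : (h \in X.1 :|: X.2) || (h \in Y.1 :|: Y.2) ->
                   h \in (scompose X Y).1 :|: (scompose X Y).2.
    by rewrite !inE; case: (h \in X.1); case: (h \in X.2); case: (h \in Y.1).
  split; rewrite /scompose /=.
  - by rewrite subUset X1 (subset_trans (subsetDl _ _) Y1).
  - by rewrite subUset X2 (subset_trans (subsetDl _ _) Y2).
  - move=> h /predU1P [-> _|hr /(Y_supp h hr) hY]; apply: XY_supp.
      by rewrite gX.
    by rewrite hY orbT.
have [[Y1 Y2] Y_cov [/= sub1 sub2 Y_supp]] := cover (enum E).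
have Y_cover g : g \in Z1 :|: Z2 -> (g \in Y1) || (g \in Y2).
  by move/(Y_supp g (mem_enum _ g)); rewrite inE.
have Z_excl g : g \in Z1 -> g \notin Z2 by move/(disjointFr Z_disj) => ->.
suff [-> ->] : Z1 = Y1 /\ Z2 = Y2 by [].
split; apply/eqP; rewrite eqEsubset ?sub1 ?sub2 andbT; apply/subsetP => g gZ.
- have /orP [] // : (g \in Y1) || (g \in Y2) by rewrite Y_cover // inE gZ.
  by move/(subsetP sub2); rewrite (negbTE (Z_excl g gZ)).
- have /orP [] // : (g \in Y1) || (g \in Y2) by rewrite Y_cover // inE gZ orbT.
  by move/(subsetP sub1)/Z_excl; rewrite gZ.
Qed.

Lemma circulation_sign_covector (V E : finType) (tl hd : E -> V) p q :
  no_loops tl hd -> circulation tl hd p -> circulation tl hd q ->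
  dual_covector tl hd ([set f | q f < p f], [set f | p f < q f]).
Proof.
move=> nl p_circ q_circ; apply: covector_of_conformal => /= [|g].
  by rewrite disjoint_subset; apply/subsetP => f; rewrite !inE -leqNgt => /ltnW.
by rewrite !inE -neq_ltn eq_sym => pq_g; apply: conformal_cycle.
Qed.

Section ThreeEdgeConnected.

Variables (V E : finType) (tl hd : E -> V).

Lemma totally_cyclic_connect :
  totally_cyclic tl hd -> forall f, connect (arcs tl hd predT) (hd f) (tl f).
Proof.
move=> tc f; have [X [[k [vs [es [vs_inj [_ [es_arc es_supp]]]]]] [X2 fX]]] := tc f.
have cyc : dcycle tl hd predT vs es.
  split=> // i; case: (es_arc i) => [[-> [-> _]] //|[_ [_ []]]].
  by rewrite X2 inE.
have /es_supp [i ->] : f \in X.1 :|: X.2 by rewrite inE fX.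
by have [_ -> ->] := cyc.2 i; apply: (dcycle_connect cyc).
Qed.

Hypothesis back : forall f, connect (arcs tl hd predT) (hd f) (tl f).

(* An undirected edge leaving T cannot point outwards, so it points inwards;
   the directed cycle through it must then leave T along a forward edge. *)
Lemma forward_closed_all (T : {set V}) u w :
  (forall u w, connect (uadj tl hd [set: E]) u w) ->
  (forall f, tl f \in T -> hd f \in T) -> u \in T -> w \in T.
Proof.
move=> conn T_closed uT; apply/negPn/negP => wT.
have [a [b [/existsP [e /andP [_ ab_e]] aT bT]]] := connect_exit (conn u w) uT wT.
case/orP: ab_e => /andP [/eqP tl_e /eqP hd_e].
  by move: bT; rewrite -hd_e T_closed // tl_e.
have hd_eT : hd e \in T by rewrite hd_e.
have tl_eT : tl e \notin T by rewrite tl_e.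
have [x [y [/existsP [f /and3P [_ /eqP tl_f /eqP hd_f]] xT yT]]] :=
  connect_exit (back e) hd_eT tl_eT.
by move: yT; rewrite -hd_f T_closed // tl_f.
Qed.

Hypothesis tec : three_edge_connected tl hd.

(* Otherwise the vertices reachable from hd e avoiding e' and from hd e'
   avoiding e partition V, and only e and e' join the two parts. *)
Lemma avoiding_cycle e e' :
  e != e' ->
  connect (arcs tl hd (predC1 e')) (hd e) (tl e) \/
  connect (arcs tl hd (predC1 e)) (hd e') (tl e').
Proof.
move=> ee'; have [c1|c1] := boolP (connect _ (hd e) (tl e)); first by left.
have [c2|c2] := boolP (connect _ (hd e') (tl e')); first by right.
exfalso.
have conn u w : connect (uadj tl hd [set: E]) u w by rewrite -setC0 tec ?cards0.
pose R := [set w | connect (arcs tl hd (predC1 e')) (hd e) w].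
pose R' := [set w | connect (arcs tl hd (predC1 e)) (hd e') w].
have R_closed f : f != e' -> tl f \in R -> hd f \in R.
  by rewrite !inE; apply: (connect_arcsS (ok := predC1 e')).
have R'_closed f : f != e -> tl f \in R' -> hd f \in R'.
  by rewrite !inE; apply: (connect_arcsS (ok := predC1 e)).
have tl_eR : tl e \notin R by rewrite inE.
have tl_e'R' : tl e' \notin R' by rewrite inE.
have hd_eR : hd e \in R by rewrite inE connect0.
have R_disj u : u \in R -> u \notin R'.
  move=> uR; apply/negP => uR'.
  have uRR' : u \in R :&: R' by rewrite inE uR uR'.
  suff : tl e \in R :&: R' by rewrite inE (negbTE tl_eR).
  apply: (forward_closed_all _ conn _ uRR') => f /setIP [fR fR'].
  rewrite inE R_closed ?R'_closed //.
  - by apply: contraNneq tl_eR => fe; rewrite -fe.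
  - by apply: contraNneq tl_e'R' => fe'; rewrite -fe'.
have R_cover u : (u \in R) || (u \in R').
  suff : u \in R :|: R' by rewrite inE.
  have hd_eRR' : hd e \in R :|: R' by rewrite inE hd_eR.
  apply: (forward_closed_all _ conn _ hd_eRR') => f /setUP [fR|fR']; rewrite inE.
    have [->|fe'] := eqVneq f e'; last by rewrite R_closed.
    by rewrite !inE connect0 orbT.
  have [->|fe] := eqVneq f e; first by rewrite hd_eR.
  by rewrite R'_closed ?orbT.
have cut2 : #|[set e; e']| <= 2 by rewrite cards2 ee'.
have [a [b [/existsP [f /andP [f_ee' ab_f]] aR bR]]] :=
  connect_exit (tec cut2 (hd e) (tl e)) hd_eR tl_eR.
move: f_ee'; rewrite !inE negb_or => /andP [fe fe'].
case/orP: ab_f => /andP [/eqP tl_f /eqP hd_f].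
  by move: bR; rewrite -hd_f R_closed // tl_f.
have /R_disj : hd f \in R by rewrite hd_f.
by rewrite R'_closed //; move: (R_cover (tl f)); rewrite tl_f (negbTE bR).
Qed.
Hypothesis nl : no_loops tl hd.

Lemma separating_circulation e e' :
  exists phi, [/\ circulation tl hd phi, e = e' -> 0 < phi e
                & e != e' -> (0 < phi e) != (0 < phi e')].
Proof.
have [<-|ee'] := eqVneq e e'.
  have [phi [phi_circ phi_e _]] := circulation_through (ok := predT) isT (nl e) (back e).
  by exists phi.
have [back_e|back_e'] := avoiding_cycle ee'.
  have [phi [phi_circ phi_e phi_0]] :=
    circulation_through (ok := predC1 e') ee' (nl e) back_e.
  by exists phi; split=> // _; rewrite phi_e phi_0 ?negbK.
have e'e : e' != e by rewrite eq_sym.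
have [phi [phi_circ phi_e' phi_0]] :=
  circulation_through (ok := predC1 e) e'e (nl e') back_e'.
exists phi; split=> [//|/eqP|_]; first by rewrite (negbTE ee').
by rewrite (phi_0 e) ?phi_e' //= eqxx.
Qed.

Lemma separating_family :
  exists K (ph : 'I_K -> E -> nat),
    [/\ forall i, circulation tl hd (ph i),
        forall e, exists i, 0 < ph i e
      & forall e e', e != e' -> exists i, (0 < ph i e) != (0 < ph i e')].
Proof.
have [W W_sep] := fin_all_exists (fun x : E * E => separating_circulation x.1 x.2).
exists #|{: E * E}|, (fun i => W (enum_val i)); split.
- by move=> i; have [] := W_sep (enum_val i).
- move=> e; exists (enum_rank (e, e)); rewrite enum_rankK.
  by have [_ /(_ erefl)] := W_sep (e, e).
- move=> e e' ee'; exists (enum_rank (e, e')); rewrite enum_rankK.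
  by have [_ _ /(_ ee')] := W_sep (e, e').
Qed.

End ThreeEdgeConnected.

Lemma eq_digits N K (a b : 'I_K -> nat) :
  (forall i, a i < N) -> (forall i, b i < N) ->
  \sum_(i < K) N ^ i * a i = \sum_(i < K) N ^ i * b i -> a =1 b.
Proof.
elim: K a b => [|K IH] a b a_lt b_lt; first by move=> _ [].
rewrite !big_ord_recl !expn0 !mul1n.
have N_gt0 : 0 < N by apply: leq_ltn_trans (a_lt ord0).
have shift (c : 'I_K.+1 -> nat) :
    \sum_(i < K) N ^ bump 0 i * c (lift ord0 i) = N * \sum_(i < K) N ^ i * c (lift ord0 i).
  by rewrite big_distrr; apply: eq_bigr => i _; rewrite /bump /= expnS mulnA.
rewrite !shift => eq_ab.
have ab0 : a ord0 = b ord0.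
  move/(congr1 (modn^~ N)): eq_ab.
  by rewrite ![N * _]mulnC ![_ + _ * N]addnC !modnMDl !modn_small.
have /IH ab_lift : \sum_(i < K) N ^ i * a (lift ord0 i) = \sum_(i < K) N ^ i * b (lift ord0 i).
  by apply/eqP; rewrite -(eqn_pmul2l N_gt0); apply/eqP; move: eq_ab; rewrite ab0 => /addnI.
move=> i; case: (unliftP ord0 i) => [j ->|->] //.
exact: ab_lift.
Qed.

Lemma ltn_cross_trans (a1 a2 a3 b1 b2 b3 : nat) :
  0 < b2 -> a1 * b2 < a2 * b1 -> a2 * b3 < a3 * b2 -> a1 * b3 < a3 * b1.
Proof.
move=> b2_gt0 lt12 lt23; rewrite -(ltn_pmul2r b2_gt0).
have b1_gt0 : 0 < b1 by case: b1 lt12; rewrite ?muln0.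
have le12 : a1 * b2 * b3 <= a2 * b1 * b3 by rewrite leq_mul2r ltnW ?orbT.
have lt23' : a2 * b3 * b1 < a3 * b2 * b1 by rewrite ltn_pmul2r.
rewrite mulnAC [a3 * b1 * b2]mulnAC (leq_ltn_trans le12) //.
by rewrite mulnAC.
Qed.

Section RankOfStrictOrder.

Variables (T : finType) (lt : rel T).
Hypotheses (lt_irr : irreflexive lt) (lt_trans : transitive lt)
           (lt_total : forall x y, x != y -> lt x y || lt y x).

Definition rank_above x := #|[set y | lt x y]|.

Lemma rank_above_ltE x y : (rank_above y < rank_above x) = lt x y.
Proof.
have rank_lt u v : lt u v -> rank_above v < rank_above u.
  move=> uv; apply: proper_card; apply/properP; split.
    by apply/subsetP => w; rewrite !inE; apply: lt_trans.
  by exists v; rewrite !inE ?lt_irr.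
apply/idP/idP => [|/rank_lt //] ryx.
have [exy|/lt_total/orP [] // /rank_lt] := eqVneq x y.
  by rewrite exy ltnn in ryx.
by move/(ltn_trans ryx); rewrite ltnn.
Qed.

Lemma rank_above_inj : injective rank_above.
Proof.
move=> x y rxy; apply/eqP/negPn/negP => /lt_total/orP [];
  by rewrite -rank_above_ltE rxy ltnn.
Qed.

End RankOfStrictOrder.

Lemma lincomb_distinct_ratios (E : finType) K (ph : 'I_K -> E -> nat) :
  (forall e, exists i, 0 < ph i e) ->
  (forall e e', e != e' -> exists i, (0 < ph i e) != (0 < ph i e')) ->
  exists c1 c2, (forall f, 0 < lincomb c2 ph f) /\
    forall e e', e != e' ->
      lincomb c1 ph e * lincomb c2 ph e' != lincomb c1 ph e' * lincomb c2 ph e.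
Proof.
move=> ph_cover ph_sep.
pose phi2 := lincomb (fun=> 1) ph.
pose N := (\sum_f phi2 f) ^ 2 + 1.
exists (fun i : 'I_K => N ^ i), (fun=> 1); rewrite -/phi2.
have ph_le i f : ph i f <= phi2 f by rewrite /phi2 /lincomb (bigD1 i) //= mul1n leq_addr.
have phi2_le f : phi2 f <= \sum_f phi2 f by rewrite (bigD1 f) //= leq_addr.
have phi2_gt0 f : 0 < phi2 f by have [i /leq_trans] := ph_cover f; apply.
split=> // e e' ee'; apply/negP => /eqP eq_ratio.
(* the products ph i x * phi2 y are base-N digits of phi1 x * phi2 y *)
have digit_lt i x y : ph i x * phi2 y < N.
  by rewrite /N addn1 ltnS leq_mul // (leq_trans (ph_le i x)).
have digitwise : forall i, ph i e * phi2 e' = ph i e' * phi2 e.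
  apply: (eq_digits (a := fun i => ph i e * phi2 e') (b := fun i => ph i e' * phi2 e)) => //.
  under eq_bigr do rewrite mulnA; under [RHS]eq_bigr do rewrite mulnA.
  by move: eq_ratio; rewrite /lincomb !big_distrl.
have [i sep_i] := ph_sep e e' ee'.
move: sep_i (digitwise i) (phi2_gt0 e) (phi2_gt0 e').
by case: (ph i e) => [|x]; case: (ph i e') => [|y] //= _; nia.
Qed.

Lemma strong_map_of_ratios (V E : finType) (tl hd : E -> V) (phi1 phi2 : E -> nat) :
  no_loops tl hd -> circulation tl hd phi1 -> circulation tl hd phi2 ->
  (forall f, 0 < phi2 f) ->
  (forall e e', e != e' -> phi1 e * phi2 e' != phi1 e' * phi2 e) ->
  exists r : E -> nat, injective r /\ strong_map_dual_to_order tl hd r.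
Proof.
move=> nl phi1_circ phi2_circ phi2_gt0 ratio_neq.
pose lt e f := phi1 e * phi2 f < phi1 f * phi2 e.
have lt_irr : irreflexive lt by move=> e; rewrite /lt ltnn.
have lt_trans : transitive lt by move=> f e g; apply: ltn_cross_trans (phi2_gt0 f).
have lt_total e f : e != f -> lt e f || lt f e by move/ratio_neq; rewrite /lt neq_ltn.
exists (rank_above lt); split; first exact: rank_above_inj.
move=> X [e X_e].
pose p f := phi2 e * phi1 f; pose q f := phi1 e * phi2 f.
have p_circ : circulation tl hd p by apply: circulationZ.
have q_circ : circulation tl hd q by apply: circulationZ.
have [below_e above_e] :
    [set f | rank_above lt f < rank_above lt e] = [set f | q f < p f] /\
    [set f | rank_above lt e < rank_above lt f] = [set f | p f < q f].
  by split; apply/setP => f;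
    rewrite !inE !(rank_above_ltE lt_irr lt_trans lt_total) /lt /p /q [phi1 f * _]mulnC.
by case: X_e => ->; rewrite below_e above_e; apply: circulation_sign_covector.
Qed.

Theorem corollaryc (V E : finType) (tl hd : E -> V) :
  totally_cyclic tl hd ->
  no_loops tl hd ->
  no_parallel_antiparallel tl hd ->
  three_edge_connected tl hd ->
  exists r : E -> nat, injective r /\ strong_map_dual_to_order tl hd r.
Proof.
move=> tc nl _ tec. (* parallel edges do no harm *)
have [K [ph [ph_circ ph_cover ph_sep]]] :=
  separating_family (totally_cyclic_connect tc) tec nl.
have [c1 [c2 [phi2_gt0 ratio_neq]]] := lincomb_distinct_ratios ph_cover ph_sep.
exact: strong_map_of_ratios nl (circulation_lincomb c1 ph_circ)
                              (circulation_lincomb c2 ph_circ) phi2_gt0 ratio_neq.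
Qed.
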